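(* $F_{\{1,2\}}=\emptyset$, and $\overline{F}_{\{1,2\}}$ consists of a single point, namely $\overline{F}_{\{1,2\}}=F_{\{1,2,3,5,10,11\}}=\{p_2\}$, where $p_2$ is the unique fixed point of $G_2$ in $H^2_\mathbb{C}$.
   Context: Hermitian form on $\mathbb{C}^3$: $\langle V,W\rangle=V_1\overline{W_3}+V_2\overline{W_2}+V_3\overline{W_1}$. Let $$G_1=\begin{pmatrix}1&1&-\frac{1+i\sqrt7}{2}\\0&1&-1\\0&0&1\end{pmatrix},\quad G_3=\begin{pmatrix}1&0&0\\-1&1&0\\ \frac{-1+i\sqrt7}{2}&1&1\end{pmatrix},\quad G_2=G_3G_1^{-1}G_3^{-1}G_1,$$ $Q=(1,0,0)^T$. Set $\gamma_1=G_2,\gamma_2=G_2^{-1},\gamma_3=G_3,\gamma_4=G_3^{-1}$ and, for $k\ge1$ and $1\le j\le4$, $\gamma_{8k-4+j}=G_1^k\gamma_jG_1^{-k}$, $\gamma_{8k+j}=G_1^{-k}\gamma_jG_1^{k}$. For $Z\in\mathbb{C}^3\setminus\{0\}$ let $f_0(Z)=\langle Z,Z\rangle$ and $f_j(Z)=|\langle Z,Q\rangle|^2-|\langle Z,\gamma_jQ\rangle|^2$ for $j\ge1$ (homogeneous, so their signs are defined on $\mathbb{C}P^2$). Let $I=\{0,1,2,\dots\}$. For disjoint $J,K\subset I$, $F_{J,K}=\{[Z]\in\mathbb{C}P^2: f_j(Z)=0\ \forall j\in J,\ f_i(Z)<0\ \forall i\in K\}$, $\overline{F}_{J,K}$ is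 defined likewise with $f_i\le0$ for $i\in K$, $F_J=F_{J,I\setminus J}$ and $\overline{F}_J=\overline{F}_{J,I\setminus J}$. *)

From Stdlib Require Import Reals Lra Lia Arith.
Open Scope R_scope.

Record C := mkC { re : R; im : R }.
Definition C0 : C := mkC 0 0.
Definition C1 : C := mkC 1 0.
Definition Cadd (z w : C) : C := mkC (re z + re w) (im z + im w).
Definition Copp (z : C) : C := mkC (- re z) (- im z).
Definition Cmul (z w : C) : C :=
  mkC (re z * re w - im z * im w) (re z * im w + im z * re w).
Definition Cconj (z : C) : C := mkC (re z) (- im z).
Definition Cnorm2 (z : C) : R := re z * re z + im z * im z.

Record V3 := mkV { x1 : C; x2 : C; x3 : C }.
Definition Vscale (l : C) (Z : V3) : V3 :=
  mkV (Cmul l (x1 Z)) (Cmul l (x2 Z)) (Cmul l (x3 Z)).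
Definition Vnonzero (Z : V3) : Prop := ~ (x1 Z = C0 /\ x2 Z = C0 /\ x3 Z = C0).

Record M3 := mkM { a11 : C; a12 : C; a13 : C;
                   a21 : C; a22 : C; a23 : C;
                   a31 : C; a32 : C; a33 : C }.
Definition Cadd3 (a b c : C) : C := Cadd a (Cadd b c).
Definition Mmul (A B : M3) : M3 :=
  mkM (Cadd3 (Cmul (a11 A) (a11 B)) (Cmul (a12 A) (a21 B)) (Cmul (a13 A) (a31 B)))
      (Cadd3 (Cmul (a11 A) (a12 B)) (Cmul (a12 A) (a22 B)) (Cmul (a13 A) (a32 B)))
      (Cadd3 (Cmul (a11 A) (a13 B)) (Cmul (a12 A) (a23 B)) (Cmul (a13 A) (a33 B)))
      (Cadd3 (Cmul (a21 A) (a11 B)) (Cmul (a22 A) (a21 B)) (Cmul (a23 A) (a31 B)))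
      (Cadd3 (Cmul (a21 A) (a12 B)) (Cmul (a22 A) (a22 B)) (Cmul (a23 A) (a32 B)))
      (Cadd3 (Cmul (a21 A) (a13 B)) (Cmul (a22 A) (a23 B)) (Cmul (a23 A) (a33 B)))
      (Cadd3 (Cmul (a31 A) (a11 B)) (Cmul (a32 A) (a21 B)) (Cmul (a33 A) (a31 B)))
      (Cadd3 (Cmul (a31 A) (a12 B)) (Cmul (a32 A) (a22 B)) (Cmul (a33 A) (a32 B)))
      (Cadd3 (Cmul (a31 A) (a13 B)) (Cmul (a32 A) (a23 B)) (Cmul (a33 A) (a33 B))).
Definition Mapp (A : M3) (Z : V3) : V3 :=
  mkV (Cadd3 (Cmul (a11 A) (x1 Z)) (Cmul (a12 A) (x2 Z)) (Cmul (a13 A) (x3 Z)))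
      (Cadd3 (Cmul (a21 A) (x1 Z)) (Cmul (a22 A) (x2 Z)) (Cmul (a23 A) (x3 Z)))
      (Cadd3 (Cmul (a31 A) (x1 Z)) (Cmul (a32 A) (x2 Z)) (Cmul (a33 A) (x3 Z))).
Definition Mid : M3 := mkM C1 C0 C0 C0 C1 C0 C0 C0 C1.
Fixpoint Mpow (A : M3) (k : nat) : M3 :=
  match k with O => Mid | S k' => Mmul A (Mpow A k') end.

Definition herm (V W : V3) : C :=
  Cadd3 (Cmul (x1 V) (Cconj (x3 W))) (Cmul (x2 V) (Cconj (x2 W)))
        (Cmul (x3 V) (Cconj (x1 W))).

Definition s7 : R := sqrt 7.
Definition cA : C := mkC (- (1/2)) (- (s7 / 2)).
Definition cB : C := mkC (- (1/2)) (s7 / 2).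
Definition cBbar : C := mkC (- (1/2)) (- (s7 / 2)).
Definition Cm1 : C := Copp C1.

Definition G1 : M3 := mkM C1 C1 cA  C0 C1 Cm1  C0 C0 C1.
Definition G3 : M3 := mkM C1 C0 C0  Cm1 C1 C0  cB C1 C1.
Definition G1inv : M3 := mkM C1 Cm1 cB  C0 C1 C1  C0 C0 C1.
Definition G3inv : M3 := mkM C1 C0 C0  C1 C1 C0  cBbar Cm1 C1.

Definition G2 : M3 := Mmul G3 (Mmul G1inv (Mmul G3inv G1)).
Definition G2inv : M3 := Mmul G1inv (Mmul G3 (Mmul G1 G3inv)).

Definition Q : V3 := mkV C1 C0 C0.

Definition gbase (r : nat) : M3 :=
  match r with 0%nat => G2 | 1%nat => G2inv | 2%nat => G3 | _ => G3inv end.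

(* gamma_n for n >= 1: write n - 1 = 4 q + r (0 <= r < 4), j = r + 1.
   q = 0        : gamma_n = gamma_j
   q = 2k - 1   : n = 8k-4+j,  gamma_n = G1^k gamma_j G1^{-k}
   q = 2k (k>=1): n = 8k+j,    gamma_n = G1^{-k} gamma_j G1^k      *)
Definition gamma (n : nat) : M3 :=
  let m := (n - 1)%nat in
  let q := (m / 4)%nat in
  let r := (m mod 4)%nat in
  match q with
  | O => gbase r
  | _ => if Nat.odd q
         then let k := ((q + 1) / 2)%nat in
              Mmul (Mpow G1 k) (Mmul (gbase r) (Mpow G1inv k))
         else let k := (q / 2)%nat in
              Mmul (Mpow G1inv k) (Mmul (gbase r) (Mpow G1 k))
  end.

(* f_0(Z) = <Z,Z>, which is real; we take its real part. *)
Definition fj (j : nat) (Z : V3) : R :=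
  match j with
  | O => re (herm Z Z)
  | _ => Cnorm2 (herm Z Q) - Cnorm2 (herm Z (Mapp (gamma j) Q))
  end.

(* ---------- the sets F_{J,K}, Fbar_{J,K}, F_J, Fbar_J ----------
   Points of CP^2 are represented by nonzero vectors of C^3; all conditions
   are invariant under nonzero rescaling. *)
Definition F_JK (J K : nat -> Prop) (Z : V3) : Prop :=
  Vnonzero Z /\ (forall j, J j -> fj j Z = 0) /\ (forall i, K i -> fj i Z < 0).
Definition Fbar_JK (J K : nat -> Prop) (Z : V3) : Prop :=
  Vnonzero Z /\ (forall j, J j -> fj j Z = 0) /\ (forall i, K i -> fj i Z <= 0).
Definition compl (J : nat -> Prop) : nat -> Prop := fun i => ~ J i.
Definition F_ (J : nat -> Prop) : V3 -> Prop := F_JK J (compl J).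
Definition Fbar_ (J : nat -> Prop) : V3 -> Prop := Fbar_JK J (compl J).

Definition proj_eq (Z W : V3) : Prop := exists c : C, c <> C0 /\ W = Vscale c Z.
Definition proj_fixed (A : M3) (Z : V3) : Prop := exists l : C, Mapp A Z = Vscale l Z.

Definition J12 : nat -> Prop := fun j => j = 1%nat \/ j = 2%nat.
Definition J123_5_10_11 : nat -> Prop :=
  fun j => j = 1%nat \/ j = 2%nat \/ j = 3%nat \/ j = 5%nat \/ j = 10%nat \/ j = 11%nat.

Lemma C_ext (z w : C) : re z = re w -> im z = im w -> z = w.
Proof. destruct z, w; simpl; intros; subst; reflexivity. Qed.

Ltac mat_ring :=
  repeat match goal with |- mkM _ _ _ _ _ _ _ _ _ = _ => f_equal end;
  apply C_ext; simpl; ring.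

Lemma G1_G1inv : Mmul G1 G1inv = Mid.
Proof. unfold Mmul, Mid, G1, G1inv; simpl; f_equal; apply C_ext; unfold cA, cB; simpl; field. Qed.
Lemma G1inv_G1 : Mmul G1inv G1 = Mid.
Proof. unfold Mmul, Mid, G1, G1inv; simpl; f_equal; apply C_ext; unfold cA, cB; simpl; field. Qed.
Lemma G3_G3inv : Mmul G3 G3inv = Mid.
Proof. unfold Mmul, Mid, G3, G3inv; simpl; f_equal; apply C_ext; unfold cBbar, cB; simpl; field. Qed.
Lemma G3inv_G3 : Mmul G3inv G3 = Mid.
Proof. unfold Mmul, Mid, G3, G3inv; simpl; f_equal; apply C_ext; unfold cBbar, cB; simpl; field. Qed.

Lemma gamma_low (j : nat) : (1 <= j <= 4)%nat -> gamma j = gbase (j - 1).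
Proof. intros H; destruct j as [|[|[|[|[|j]]]]]; try lia; reflexivity. Qed.

Lemma gamma_8km4 (k j : nat) : (1 <= k)%nat -> (1 <= j <= 4)%nat ->
  gamma (8 * k - 4 + j) = Mmul (Mpow G1 k) (Mmul (gbase (j - 1)) (Mpow G1inv k)).
Proof.
  intros Hk Hj. unfold gamma.
  assert (Hq : ((8 * k - 4 + j - 1) / 4 = 2 * k - 1)%nat).
  { symmetry; apply Nat.div_unique with (j - 1)%nat; lia. }
  assert (Hr : ((8 * k - 4 + j - 1) mod 4 = j - 1)%nat).
  { symmetry; apply Nat.mod_unique with (2 * k - 1)%nat; lia. }
  rewrite Hq, Hr.
  replace (2 * k - 1)%nat with (S (2 * (k - 1)))%nat by lia.
  cbv beta iota zeta.
  replace ((S (2 * (k - 1)) + 1) / 2)%nat with k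
    by (apply Nat.div_unique with 0%nat; lia).
  rewrite Nat.odd_succ, Nat.even_mul. change (Nat.even 2) with true. cbn [orb].
  reflexivity.
Qed.

Lemma gamma_8k (k j : nat) : (1 <= k)%nat -> (1 <= j <= 4)%nat ->
  gamma (8 * k + j) = Mmul (Mpow G1inv k) (Mmul (gbase (j - 1)) (Mpow G1 k)).
Proof.
  intros Hk Hj. unfold gamma.
  assert (Hq : ((8 * k + j - 1) / 4 = 2 * k)%nat).
  { symmetry; apply Nat.div_unique with (j - 1)%nat; lia. }
  assert (Hr : ((8 * k + j - 1) mod 4 = j - 1)%nat).
  { symmetry; apply Nat.mod_unique with (2 * k)%nat; lia. }
  rewrite Hq, Hr.
  replace (2 * k)%nat with (S (2 * (k - 1) + 1))%nat by lia.
  cbv beta iota zeta.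
  replace ((S (2 * (k - 1) + 1)) / 2)%nat with k
    by (apply Nat.div_unique with 0%nat; lia).
  rewrite Nat.odd_succ, Nat.add_comm, Nat.even_add_mul_2. cbn [Nat.even].
  reflexivity.
Qed.

(* G1 is unipotent and fixes Q, so every gamma_n Q is G1^m applied to one of G2 Q, G2^-1 Q,
   G3 Q, G3^-1 Q, with m = 0 or m = +-k.  At the fixed point P2 of G2 this makes f_n(P2) minus
   an explicit quartic in m, which vanishes exactly for n in {1,2,3,5,10,11} and is positive
   otherwise.  G2 has characteristic polynomial (l - 1)(l^2 + 1) and its eigenvectors for +-i
   are not negative, so [P2] is its only fixed point in the ball.  Conversely a point of
   Fbar_{1,2} has z3 <> 0; normalising z3 = 1 and taking u = z1, w = <Z, G2 Q> as coordinates,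
   f2 = f1 = 0 put (u, w) on the torus |u| = |w| = 1, where f0, f3, f10 <= 0 force u = -1 and
   w = 1, i.e. Z ~ P2.  Since f3(P2) = 0, F_{1,2} is empty. *)

From Pilot Require Import Defs.
From Stdlib Require Import Reals Lra Psatz Lia.
Import Defs.
Open Scope R_scope.

Lemma s7_sqr : s7 * s7 = 7.
Proof. apply sqrt_sqrt; lra. Qed.

Lemma s7_pos : 0 < s7.
Proof. apply sqrt_lt_R0; lra. Qed.

Lemma s7_pow_SS (n : nat) : s7 ^ S (S n) = 7 * s7 ^ n.
Proof. rewrite <- s7_sqr; simpl; ring. Qed.

Ltac ring_s7 :=
  first [ ring
        | ring_simplify; rewrite ?s7_pow_SS; ring
        | field_simplify; rewrite ?s7_pow_SS; field ].

Definition Csub (z w : C) : C := Cadd z (Copp w).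

Lemma C_ring : ring_theory C0 C1 Cadd Cmul Csub Copp (@eq C).
Proof.
  constructor; intros; repeat match goal with z : C |- _ => destruct z end;
  apply C_ext; simpl; ring.
Qed.

Add Ring C_ring : C_ring.

Lemma Cnorm2_mul (z w : C) : Cnorm2 (Cmul z w) = Cnorm2 z * Cnorm2 w.
Proof. destruct z, w; unfold Cnorm2; simpl; ring. Qed.

Lemma Cnorm2_eq0 (z : C) : Cnorm2 z = 0 -> z = C0.
Proof. destruct z as [a b]; unfold Cnorm2; simpl; intros; apply C_ext; simpl; nra. Qed.

Lemma Cnorm2_pos (z : C) : z <> C0 -> 0 < Cnorm2 z.
Proof.
  intros Hz; destruct (Rle_lt_or_eq_dec 0 (Cnorm2 z)) as [|E]; auto.
  - destruct z; unfold Cnorm2; simpl; nra.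
  - now exfalso; apply Hz, Cnorm2_eq0.
Qed.

Lemma Cmul_eq0 (z w : C) : Cmul z w = C0 -> z = C0 \/ w = C0.
Proof.
  intros E; assert (N : Cnorm2 z * Cnorm2 w = 0)
    by (rewrite <- Cnorm2_mul, E; unfold Cnorm2; simpl; ring).
  destruct (Rmult_integral _ _ N); [left | right]; now apply Cnorm2_eq0.
Qed.

Definition Cinv (z : C) : C := mkC (re z / Cnorm2 z) (- im z / Cnorm2 z).

Lemma Cmul_Cinv (z : C) : z <> C0 -> Cmul z (Cinv z) = C1.
Proof.
  intros Hz; pose proof (Cnorm2_pos z Hz) as Hp.
  destruct z as [a b]; unfold Cinv, Cnorm2, C1 in *; apply C_ext; simpl in *; field; lra.
Qed.

Definition two : C := Cadd C1 C1.
Definition u2 : C := mkC (3/2) (- (s7/2)).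
Definition w2 : C := mkC (-3/2) (- (s7/2)).

Definition P2 : V3 := mkV (mkC 2 0) w2 (mkC (-2) 0).

Ltac expand :=
  unfold Mapp, Mmul, herm, Vscale, Cnorm2, G1, G1inv, G3, G3inv, Q, Cadd3, Cadd,
    Cmul, Cconj, Copp, cA, cB, cBbar, Cm1, C0, C1, two, u2, w2 in *; simpl in *.

Ltac inject_C :=
  repeat match goal with
  | H : mkC _ _ = mkC _ _ |- _ => let a := fresh "E" in let b := fresh "E" in injection H as a b
  end.

Lemma V3_ext (Z W : V3) : x1 Z = x1 W -> x2 Z = x2 W -> x3 Z = x3 W -> Z = W.
Proof. destruct Z, W; simpl; intros; subst; reflexivity. Qed.

Ltac vec_eq := apply V3_ext; apply C_ext; expand; ring_s7.

Lemma M3_ext (A B : M3) :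
  a11 A = a11 B -> a12 A = a12 B -> a13 A = a13 B ->
  a21 A = a21 B -> a22 A = a22 B -> a23 A = a23 B ->
  a31 A = a31 B -> a32 A = a32 B -> a33 A = a33 B -> A = B.
Proof. destruct A, B; simpl; intros; subst; reflexivity. Qed.

Ltac mat_eq := apply M3_ext; apply C_ext; expand; ring_s7.

Lemma Mapp_Mmul (A B : M3) (Z : V3) : Mapp (Mmul A B) Z = Mapp A (Mapp B Z).
Proof. destruct A, B, Z; unfold Mapp, Mmul, Cadd3; simpl; f_equal; ring. Qed.

Lemma herm_Vscale (c : C) (Z W : V3) : herm (Vscale c Z) W = Cmul c (herm Z W).
Proof. destruct Z, W; unfold herm, Vscale, Cadd3; simpl; ring. Qed.

Lemma fj_Vscale (n : nat) (c : C) (Z : V3) : fj n (Vscale c Z) = Cnorm2 c * fj n Z.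
Proof.
  destruct n.
  - destruct c, Z as [[] [] []]; unfold fj; expand; ring.
  - unfold fj; rewrite !herm_Vscale, !Cnorm2_mul; ring.
Qed.

Lemma Vscale_Vscale (a b : C) (Z : V3) : Vscale a (Vscale b Z) = Vscale (Cmul a b) Z.
Proof. destruct Z; unfold Vscale; simpl; f_equal; ring. Qed.

Lemma fj_gamma (n : nat) (Z : V3) : (1 <= n)%nat ->
  fj n Z = Cnorm2 (herm Z Q) - Cnorm2 (herm Z (Mapp (gamma n) Q)).
Proof. intros Hn; destruct n; [lia | reflexivity]. Qed.

Definition Rscale (r : R) (z : C) : C := mkC (r * re z) (r * im z).

(* G1 is unipotent, so G1^m W is polynomial in m; allowing real m covers G1^k and G1^-k at once. *)
Definition G1_pow (m : R) (W : V3) : V3 :=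
  mkV (Cadd (Cadd (x1 W) (Rscale m (x2 W)))
            (Cadd (Rscale m (Cmul cA (x3 W))) (Rscale (- (m * (m - 1) / 2)) (x3 W))))
      (Cadd (x2 W) (Rscale (- m) (x3 W)))
      (x3 W).

Lemma G1_pow_0 (W : V3) : G1_pow 0 W = W.
Proof. destruct W as [[] [] []]; unfold G1_pow, Rscale; vec_eq. Qed.

Lemma G1_G1_pow (m : R) (W : V3) : Mapp G1 (G1_pow m W) = G1_pow (m + 1) W.
Proof. destruct W as [[] [] []]; unfold G1_pow, Rscale; vec_eq. Qed.

Lemma G1inv_G1_pow (m : R) (W : V3) : Mapp G1inv (G1_pow m W) = G1_pow (m - 1) W.
Proof. destruct W as [[] [] []]; unfold G1_pow, Rscale; vec_eq. Qed.

Lemma G1_pow_Q (m : R) : G1_pow m Q = Q.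
Proof. unfold G1_pow, Rscale; vec_eq. Qed.

Lemma Mapp_Mid (W : V3) : Mapp Mid W = W.
Proof. destruct W as [[] [] []]; unfold Mid; vec_eq. Qed.

Lemma Mpow_G1 (k : nat) (W : V3) : Mapp (Mpow G1 k) W = G1_pow (INR k) W.
Proof.
  induction k as [|k IH]; simpl Mpow.
  - now rewrite Mapp_Mid, G1_pow_0.
  - now rewrite Mapp_Mmul, IH, G1_G1_pow, S_INR.
Qed.

Lemma Mpow_G1inv (k : nat) (W : V3) : Mapp (Mpow G1inv k) W = G1_pow (- INR k) W.
Proof.
  induction k as [|k IH]; simpl Mpow.
  - rewrite Mapp_Mid; simpl INR; rewrite Ropp_0; now rewrite G1_pow_0.
  - rewrite Mapp_Mmul, IH, G1inv_G1_pow, S_INR; f_equal; ring.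
Qed.

Lemma gamma_index_cases (n : nat) : (1 <= n)%nat ->
  (1 <= n <= 4)%nat \/
  (exists k j, (1 <= k)%nat /\ (1 <= j <= 4)%nat /\ n = (8 * k - 4 + j)%nat) \/
  (exists k j, (1 <= k)%nat /\ (1 <= j <= 4)%nat /\ n = (8 * k + j)%nat).
Proof.
  intros Hn.
  assert (Hd : (n - 1 = 8 * ((n - 1) / 8) + (n - 1) mod 8)%nat) by (apply Nat.div_mod; lia).
  assert (Hb : ((n - 1) mod 8 < 8)%nat) by (apply Nat.mod_upper_bound; lia).
  revert Hd Hb; generalize ((n - 1) / 8)%nat ((n - 1) mod 8)%nat; intros a b Hd Hb.
  destruct (Nat.lt_ge_cases b 4), a as [|a].
  - now left; lia.
  - right; right; exists (S a), (b + 1)%nat; lia.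
  - right; left; exists 1%nat, (b - 3)%nat; lia.
  - right; left; exists (S (S a)), (b - 3)%nat; lia.
Qed.

Lemma gamma_Q_cases (n : nat) : (1 <= n)%nat ->
  (1 <= n <= 4)%nat /\ Mapp (gamma n) Q = G1_pow 0 (Mapp (gbase (n - 1)) Q) \/
  (exists k j, (1 <= k)%nat /\ (1 <= j <= 4)%nat /\ n = (8 * k - 4 + j)%nat /\
     Mapp (gamma n) Q = G1_pow (INR k) (Mapp (gbase (j - 1)) Q)) \/
  (exists k j, (1 <= k)%nat /\ (1 <= j <= 4)%nat /\ n = (8 * k + j)%nat /\
     Mapp (gamma n) Q = G1_pow (- INR k) (Mapp (gbase (j - 1)) Q)).
Proof.
  intros Hn.
  destruct (gamma_index_cases n Hn) as [H | [[k [j [Hk [Hj ->]]]] | [k [j [Hk [Hj ->]]]]]].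
  - left; split; auto; now rewrite gamma_low, G1_pow_0.
  - right; left; exists k, j; do 3 (split; [auto|]).
    now rewrite gamma_8km4, !Mapp_Mmul, Mpow_G1inv, G1_pow_Q, Mpow_G1.
  - right; right; exists k, j; do 3 (split; [auto|]).
    now rewrite gamma_8k, !Mapp_Mmul, Mpow_G1, G1_pow_Q, Mpow_G1inv.
Qed.

Lemma G3_Q : Mapp G3 Q = mkV C1 Cm1 cB.
Proof. vec_eq. Qed.

Lemma G3inv_Q : Mapp G3inv Q = mkV C1 C1 cBbar.
Proof. vec_eq. Qed.

Lemma G2_Q : Mapp G2 Q = mkV (mkC 2 0) w2 (mkC (-1) 0).
Proof.
  unfold G2; rewrite !Mapp_Mmul.
  replace (Mapp G1 Q) with Q by vec_eq.
  rewrite G3inv_Q.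
  replace (Mapp G1inv (mkV C1 C1 cBbar))
    with (mkV (mkC 2 0) (mkC (1/2) (- (s7/2))) cBbar) by vec_eq.
  vec_eq.
Qed.

Lemma G2inv_Q : Mapp G2inv Q = mkV C0 C0 (mkC (-1) 0).
Proof.
  unfold G2inv; rewrite !Mapp_Mmul, G3inv_Q.
  replace (Mapp G1 (mkV C1 C1 cBbar))
    with (mkV (mkC (1/2) (s7/2)) (mkC (3/2) (s7/2)) cBbar) by vec_eq.
  replace (Mapp G3 (mkV (mkC (1/2) (s7/2)) (mkC (3/2) (s7/2)) cBbar))
    with (mkV (mkC (1/2) (s7/2)) C1 Cm1) by vec_eq.
  vec_eq.
Qed.

Definition P2_gap (r : nat) (m : R) : R :=
  match r with
  | 0 => m * (m - 1) * (m * m - 2 * m + 6)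
  | 1 => m * (m + 1) * (m * m + 2 * m + 6)
  | 2 => m * (m + 1) * (2 * m * m + 2 * m + 5)
  | _ => 2 * (m * m + 2 * m + 2) ^ 2 + 10
  end.

Lemma norm_herm_P2_Q : Cnorm2 (herm P2 Q) = 4.
Proof. unfold P2; expand; ring. Qed.

Lemma norm_herm_P2_gbase (r : nat) (m : R) : (r <= 3)%nat ->
  Cnorm2 (herm P2 (G1_pow m (Mapp (gbase r) Q))) = 4 + P2_gap r m.
Proof.
  intros Hr; destruct r as [|[|[|[|r]]]]; try lia; simpl gbase;
    rewrite ?G2_Q, ?G2inv_Q, ?G3_Q, ?G3inv_Q;
    unfold P2, P2_gap, G1_pow, Rscale; expand; ring_s7.
Qed.

Lemma P2_gap_pos (r : nat) (m : R) : m <= -2 \/ 2 <= m -> 0 < P2_gap r m.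
Proof.
  intros Hm.
  assert (Hm1 : 0 < m * (m - 1)) by nra; assert (Hp1 : 0 < m * (m + 1)) by nra.
  destruct r as [|[|[|r]]]; simpl; try (apply Rmult_lt_0_compat; [assumption | nra]).
  pose proof (pow2_ge_0 (m * m + 2 * m + 2)); lra.
Qed.

Lemma fj_P2_gbase (n r : nat) (m : R) : (1 <= n)%nat -> (r <= 3)%nat ->
  Mapp (gamma n) Q = G1_pow m (Mapp (gbase r) Q) -> fj n P2 = - P2_gap r m.
Proof.
  intros Hn Hr E.
  rewrite (fj_gamma n P2 Hn), E, norm_herm_P2_Q, (norm_herm_P2_gbase r m Hr); ring.
Qed.

Lemma fj0_P2 : fj 0 P2 = -4.
Proof. unfold fj, P2; expand; ring_s7. Qed.

Lemma fj_P2_sign (n : nat) :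
  (J123_5_10_11 n /\ fj n P2 = 0) \/ (~ J123_5_10_11 n /\ fj n P2 < 0).
Proof.
  destruct (Nat.eq_dec n 0) as [-> | Hn0].
  { right; split; [unfold J123_5_10_11; lia | rewrite fj0_P2; lra]. }
  assert (Hn : (1 <= n)%nat) by lia.
  unfold J123_5_10_11.
  destruct (gamma_Q_cases n Hn) as [[Hl E] | [[k [j [Hk [Hj [-> E]]]]] | [k [j [Hk [Hj [-> E]]]]]]].
  - rewrite (fj_P2_gbase _ (n - 1)%nat 0 Hn ltac:(lia) E).
    destruct n as [|[|[|[|[|n]]]]]; try lia; simpl; [left | left | left | right]; split; lra || lia.
  - rewrite (fj_P2_gbase _ (j - 1)%nat (INR k) Hn ltac:(lia) E).
    destruct (Nat.eq_dec k 1) as [-> | Hk1].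
    + destruct j as [|[|[|[|[|j]]]]]; try lia; simpl;
        [left | right | right | right]; split; lra || lia.
    + pose proof (P2_gap_pos (j - 1)%nat (INR k)) as Hpos.
      assert (2 <= INR k) by (apply (le_INR 2); lia).
      right; split; [lia | lra].
  - rewrite (fj_P2_gbase _ (j - 1)%nat (- INR k) Hn ltac:(lia) E).
    destruct (Nat.eq_dec k 1) as [-> | Hk1].
    + destruct j as [|[|[|[|[|j]]]]]; try lia; simpl;
        [right | left | left | right]; split; lra || lia.
    + pose proof (P2_gap_pos (j - 1)%nat (- INR k)) as Hpos.
      assert (2 <= INR k) by (apply (le_INR 2); lia).
      right; split; [lia | lra].
Qed.

Lemma G2_explicit : G2 = mkM two u2 Cm1  w2 Cm1 C0  Cm1 C0 C0.
Proof.
  unfold G2.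
  replace (Mmul G3inv G1) with
    (mkM C1 C1 cA  C1 (mkC 2 0) w2  cA w2 (mkC (1/2) (s7/2))) by mat_eq.
  replace (Mmul G1inv (mkM C1 C1 cA  C1 (mkC 2 0) w2  cA w2 (mkC (1/2) (s7/2)))) with
    (mkM (mkC 2 0) u2 Cm1
         (mkC (1/2) (- (s7/2))) (mkC (1/2) (- (s7/2))) Cm1
         cA w2 (mkC (1/2) (s7/2))) by mat_eq.
  mat_eq.
Qed.

Lemma u2_w2 : Cmul u2 w2 = Copp (Cadd two two).
Proof. apply C_ext; expand; ring_s7. Qed.

Lemma u2_neq0 : u2 <> C0.
Proof. intros E; injection E; lra. Qed.

Lemma G2_eig_components (l z1 z2 z3 : C) :
  Mapp G2 (mkV z1 z2 z3) = Vscale l (mkV z1 z2 z3) ->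
  Cadd3 (Cmul two z1) (Cmul u2 z2) (Cmul Cm1 z3) = Cmul l z1 /\
  Cadd3 (Cmul w2 z1) (Cmul Cm1 z2) (Cmul C0 z3) = Cmul l z2 /\
  Cadd3 (Cmul Cm1 z1) (Cmul C0 z2) (Cmul C0 z3) = Cmul l z3.
Proof.
  rewrite G2_explicit; intros H.
  exact (conj (f_equal x1 H) (conj (f_equal x2 H) (f_equal x3 H))).
Qed.

Section G2_eigenvectors.

Variables (l z1 z2 z3 : C).
Hypothesis E1 : Cadd3 (Cmul two z1) (Cmul u2 z2) (Cmul Cm1 z3) = Cmul l z1.
Hypothesis E2 : Cadd3 (Cmul w2 z1) (Cmul Cm1 z2) (Cmul C0 z3) = Cmul l z2.
Hypothesis E3 : Cadd3 (Cmul Cm1 z1) (Cmul C0 z2) (Cmul C0 z3) = Cmul l z3.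

Lemma G2_eig_z1 : z1 = Copp (Cmul l z3).
Proof. rewrite <- E3; unfold Cm1, Cadd3; ring. Qed.

(* The characteristic polynomial of G2 is (l - 1)(l^2 + 1). *)
Lemma G2_eig_charpoly : Cmul z3 (Cmul (Csub l C1) (Cadd (Cmul l l) C1)) = C0.
Proof.
  set (D1 := Csub (Cadd3 (Cmul two z1) (Cmul u2 z2) (Cmul Cm1 z3)) (Cmul l z1)).
  set (D2 := Csub (Cadd3 (Cmul w2 z1) (Cmul Cm1 z2) (Cmul C0 z3)) (Cmul l z2)).
  set (D3 := Csub (Cadd3 (Cmul Cm1 z1) (Cmul C0 z2) (Cmul C0 z3)) (Cmul l z3)).
  assert (HD1 : D1 = C0) by (unfold D1; rewrite E1; ring).
  assert (HD2 : D2 = C0) by (unfold D2; rewrite E2; ring).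
  assert (HD3 : D3 = C0) by (unfold D3; rewrite E3; ring).
  transitivity (Csub (Cadd3 (Cmul (Cadd C1 l) D1) (Cmul u2 D2)
                        (Cmul (Csub (Cmul (Csub two l) (Cadd C1 l)) (Cadd two two)) D3))
                     (Cmul (Cadd (Cmul u2 w2) (Cadd two two)) z1)).
  - unfold D1, D2, D3, Cadd3, Cm1, two; ring.
  - rewrite HD1, HD2, HD3, u2_w2; unfold Cadd3; ring.
Qed.

Lemma G2_eig_z3_eq0 : z3 = C0 -> z1 = C0 /\ z2 = C0.
Proof.
  intros Hz3; assert (Hz1 : z1 = C0) by (rewrite G2_eig_z1, Hz3; ring).
  split; [exact Hz1|].
  assert (Hu : Cmul u2 z2 = C0).
  { pose proof E1 as H1; rewrite Hz1, Hz3 in H1.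
    transitivity (Cadd3 (Cmul two C0) (Cmul u2 z2) (Cmul Cm1 C0)); [unfold Cadd3; ring|].
    rewrite H1; ring. }
  destruct (Cmul_eq0 _ _ Hu) as [H | H]; [now destruct u2_neq0 | exact H].
Qed.

Lemma G2_eig_1 : l = C1 -> z3 <> C0 -> proj_eq P2 (mkV z1 z2 z3).
Proof.
  intros Hl Hz3; exists (Cmul z3 (mkC (-1/2) 0)); split.
  - intros E; destruct (Cmul_eq0 _ _ E) as [H | H]; [easy | injection H; lra].
  - pose proof E2 as H2; rewrite G2_eig_z1 in H2 |- *; rewrite Hl in H2 |- *.
    destruct z2, z3; unfold P2; apply V3_ext; apply C_ext; expand; inject_C; lra.
Qed.

Lemma G2_eig_imaginary : Cadd (Cmul l l) C1 = C0 -> 0 <= fj 0 (mkV z1 z2 z3).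
Proof.
  intros Hl; pose proof G2_eig_z1 as Hz1.
  destruct l as [lr li], z1, z2, z3; unfold fj; expand; inject_C; subst.
  assert (lr = 0) by nra; subst lr; nra.
Qed.

End G2_eigenvectors.

Lemma G2_fixed_unique (Z : V3) :
  Vnonzero Z -> fj 0 Z < 0 -> proj_fixed G2 Z -> proj_eq P2 Z.
Proof.
  intros Hnz Hneg [l Hl]; destruct Z as [z1 z2 z3].
  destruct (G2_eig_components l z1 z2 z3 Hl) as [E1 [E2 E3]].
  assert (Hz3 : z3 <> C0).
  { intros Hz3; apply Hnz; destruct (G2_eig_z3_eq0 l z1 z2 z3 E1 E3 Hz3); auto. }
  destruct (Cmul_eq0 _ _ (G2_eig_charpoly l z1 z2 z3 E1 E2 E3)) as [H | H]; [easy|].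
  destruct (Cmul_eq0 _ _ H) as [H1 | Hi].
  - apply (G2_eig_1 l z1 z2 z3 E1 E2 E3); auto.
    transitivity (Cadd (Csub l C1) C1); [ring | rewrite H1; ring].
  - pose proof (G2_eig_imaginary l z1 z2 z3 E1 E2 E3 Hi); lra.
Qed.

Lemma P2_fixed : Mapp G2 P2 = Vscale C1 P2.
Proof. rewrite G2_explicit; unfold P2; vec_eq. Qed.

(* The point with z1 = X + iY, z3 = 1 and <Z, G2 Q> = P + iR; in these coordinates
   f2 = 1 - |z1|^2 and f1 = 1 - |<Z, G2 Q>|^2. *)
Definition torus_point (X Y P R : R) : V3 :=
  mkV (mkC X Y)
      (mkC ((- 3 * (P + X - 2) + s7 * (R + Y)) / 8) ((- s7 * (P + X - 2) - 3 * (R + Y)) / 8))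
      C1.

Lemma gamma10_Q : Mapp (gamma 10) Q = G1_pow (-1) (Mapp G2inv Q).
Proof.
  change 10%nat with (8 * 1 + 2)%nat.
  rewrite gamma_8k, !Mapp_Mmul, Mpow_G1, G1_pow_Q, Mpow_G1inv by lia.
  simpl; f_equal; ring.
Qed.

Section Torus.

Variables X Y P R : R.

Lemma fj0_torus : fj 0 (torus_point X Y P R) =
  3/2 + X - P + (X * P + Y * R) / 2 + (X * X + Y * Y - 1) / 4 + (P * P + R * R - 1) / 4.
Proof. unfold fj, torus_point; expand; ring_s7. Qed.

Lemma fj1_torus : fj 1 (torus_point X Y P R) = 1 - (P * P + R * R).
Proof.
  rewrite fj_gamma by lia; change (gamma 1) with G2; rewrite G2_Q.
  unfold torus_point; expand; ring_s7.
Qed.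

Lemma fj2_torus : fj 2 (torus_point X Y P R) = 1 - (X * X + Y * Y).
Proof.
  rewrite fj_gamma by lia; change (gamma 2) with G2inv; rewrite G2inv_Q.
  unfold torus_point; expand; ring_s7.
Qed.

Lemma fj3_torus : fj 3 (torus_point X Y P R) =
  - 3/4 + P / 4 - 5/4 * X + 3/4 * (X * P + Y * R) + s7 / 4 * (R - Y + (X * R - Y * P))
  - (P * P + R * R - 1) / 4 - (X * X + Y * Y - 1).
Proof.
  rewrite fj_gamma by lia; change (gamma 3) with G3; rewrite G3_Q.
  unfold torus_point; expand; ring_s7.
Qed.

Lemma fj10_torus : fj 10 (torus_point X Y P R) =
  - 1/4 - P / 4 - 3/4 * X + (X * P + Y * R) / 4 + s7 / 4 * (Y - R - (X * R - Y * P))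
  - (P * P + R * R - 1) / 4 - (X * X + Y * Y - 1) / 2.
Proof.
  rewrite fj_gamma, gamma10_Q, G2inv_Q by lia.
  unfold torus_point, G1_pow, Rscale; expand; ring_s7.
Qed.

End Torus.

Lemma s7_R_bound (P R : R) : P * P + R * R = 1 -> s7 * R <= 11/4 + 3/4 * P.
Proof.
  intros Hw; pose proof s7_sqr; pose proof s7_pos.
  assert (-1 <= P) by nra.
  assert ((s7 * R) ^ 2 <= (11/4 + 3/4 * P) ^ 2).
  { replace ((s7 * R) ^ 2) with (s7 * s7 * (R * R)) by ring; rewrite s7_sqr.
    pose proof (pow2_ge_0 (3/4 + 11/4 * P)); nra. }
  nra.
Qed.

Section Torus_inequalities.

Variables X Y P R : R.
Hypothesis Hu : X * X + Y * Y = 1.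
Hypothesis Hw : P * P + R * R = 1.

Let c := X * P + Y * R.
Let d := X * R - Y * P.
Let K := (- 1 + P - X + c) + s7 * (R - Y + d).

Lemma torus_identity : K ^ 2 = 4 * (1 + X) * (1 - c) * (4 + 3 * P - s7 * R).
Proof.
  pose proof s7_sqr as Hs.
  assert (E : K ^ 2 - 4 * (1 + X) * (1 - c) * (4 + 3 * P - s7 * R)
   = (s7*s7 - 2*R*s7 + R*R + 2*P*s7*s7 - 2*P*R*s7 + P*P*s7*s7) * (Y*Y + X*X - 1)
   + (1 + s7*s7 - 2*Y*s7 + 2*X*s7*s7 - 2*X*Y*s7 - X*X + X*X*s7*s7) * (R*R + P*P - 1)
   + (2 + 2*P - 2*Y*R - 2*Y*P*R + 2*X - 2*X*P*P - 2*X*Y*R - 2*X*Y*P*R - 2*X*X*P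
      - 2*X*X*P*P) * (s7*s7 - 7)) by (unfold K, c, d; ring).
  rewrite Hs in E; replace (Y*Y + X*X - 1) with 0 in E by lra;
    replace (R*R + P*P - 1) with 0 in E by lra; lra.
Qed.

Hypothesis h0 : 3/2 + X - P + c / 2 <= 0.
Hypothesis h3 : - 3/4 + P / 4 - 5/4 * X + 3/4 * c + s7 / 4 * (R - Y + d) <= 0.
Hypothesis h10 : - 1/4 - P / 4 - 3/4 * X + c / 4 + s7 / 4 * (Y - R - d) <= 0.

Lemma torus_X : X = -1.
Proof.
  assert (Hcd : c * c + d * d = 1).
  { unfold c, d; replace ((X*P + Y*R) * (X*P + Y*R) + (X*R - Y*P) * (X*R - Y*P))
      with ((X*X + Y*Y) * (P*P + R*R)) by ring; rewrite Hu, Hw; ring. }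
  assert (-1 <= c <= 1) by nra. assert (-1 <= P <= 1) by nra.
  set (T := 1 + X); set (a := (1 - c) / 2); set (L := 4 + 3 * P - s7 * R).
  (* h3 and h10 say |K| <= 4 (T - 1 + a); h0 says T <= P. *)
  assert (HK : K <= 4 * (T - 1 + a) /\ - K <= 4 * (T - 1 + a)) by (unfold K, T, a; lra).
  assert (HT : 0 <= T <= 1 /\ T <= P) by (unfold T; lra).
  assert (Ha : 1 - T <= a /\ T <= a) by (unfold T, a; lra).
  assert (HL : 5/4 + 9/4 * T <= L) by (pose proof (s7_R_bound P R Hw); unfold L; lra).
  assert (Hid : K ^ 2 = 8 * T * a * L) by (rewrite torus_identity; unfold T, a, L; field).
  assert (Ha1 : a <= 1) by (unfold a; lra).
  enough (T = 0) by (unfold T in *; lra).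
  clearbody K T a L; destruct (Req_dec T 0) as [| HT0]; [assumption | exfalso].
  assert (HKT : K ^ 2 <= 16 * T ^ 2).
  { assert (K ^ 2 <= (4 * (T - 1 + a)) ^ 2) by nra; nra. }
  assert (2 * T < a * L).
  { destruct (Rle_lt_dec T (1/2)).
    - assert (a * L >= (1 - T) * (5/4 + 9/4 * T)) by nra; nra.
    - assert (a * L >= T * (5/4 + 9/4 * T)) by nra; nra. }
  nra.
Qed.

Lemma torus_point_forced : X = -1 /\ Y = 0 /\ P = 1 /\ R = 0.
Proof.
  pose proof torus_X as HX; subst X.
  assert (HY : Y = 0) by nra; subst Y.
  assert (HP : P = 1) by (unfold c in *; nra); subst P.
  repeat split; nra.
Qed.

End Torus_inequalities.

Lemma torus_point_surj (X Y v1 v2 : R) :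
  exists P R, mkV (mkC X Y) (mkC v1 v2) C1 = torus_point X Y P R.
Proof.
  exists (- X - 3/2 * v1 - s7 / 2 * v2 + 2), (- Y + s7 / 2 * v1 - 3/2 * v2).
  unfold torus_point; vec_eq.
Qed.

Lemma normalize_x3 (Z : V3) : x3 Z <> C0 ->
  exists X Y P R, Z = Vscale (x3 Z) (torus_point X Y P R).
Proof.
  intros Hz3; destruct Z as [z1 z2 z3]; simpl in *.
  destruct (torus_point_surj (re (Cmul (Cinv z3) z1)) (im (Cmul (Cinv z3) z1))
                             (re (Cmul (Cinv z3) z2)) (im (Cmul (Cinv z3) z2))) as [P [R E]].
  exists (re (Cmul (Cinv z3) z1)), (im (Cmul (Cinv z3) z1)), P, R.
  rewrite <- E; pose proof (Cmul_Cinv z3 Hz3) as Hinv.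
  destruct (Cmul (Cinv z3) z1) as [a b] eqn:E1, (Cmul (Cinv z3) z2) as [c d] eqn:E2; simpl.
  unfold Vscale; simpl; f_equal.
  - rewrite <- E1; transitivity (Cmul (Cmul z3 (Cinv z3)) z1); [rewrite Hinv|]; ring.
  - rewrite <- E2; transitivity (Cmul (Cmul z3 (Cinv z3)) z2); [rewrite Hinv|]; ring.
  - ring.
Qed.

Lemma Fbar_J12_x3_neq0 (Z : V3) : Fbar_ J12 Z -> x3 Z <> C0.
Proof.
  intros [Hnz [HJ HK]] Hz3.
  assert (H0 : fj 0 Z <= 0) by (apply HK; unfold compl, J12; lia).
  assert (H2 : fj 2 Z = 0) by (apply HJ; unfold J12; lia).
  rewrite fj_gamma in H2 by lia; change (gamma 2) with G2inv in H2; rewrite G2inv_Q in H2.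
  destruct Z as [[a1 b1] [a2 b2] z3]; simpl in Hz3; subst z3.
  unfold fj in H0; expand.
  assert (a1 = 0 /\ b1 = 0) as [-> ->] by nra.
  assert (a2 = 0 /\ b2 = 0) as [-> ->] by nra.
  now apply Hnz.
Qed.

Lemma Fbar_J12_proj_eq (Z : V3) : Fbar_ J12 Z -> proj_eq P2 Z.
Proof.
  intros HF; pose proof (Fbar_J12_x3_neq0 Z HF) as Hz3.
  destruct (normalize_x3 Z Hz3) as [X [Y [P [R EZ]]]].
  destruct HF as [_ [HJ HK]].
  pose proof (Cnorm2_pos _ Hz3) as Hpos.
  assert (Hle : forall i, compl J12 i -> fj i (torus_point X Y P R) <= 0).
  { intros i Hi; pose proof (HK i Hi) as H; rewrite EZ, fj_Vscale in H; nra. }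
  assert (Heq : forall j, J12 j -> fj j (torus_point X Y P R) = 0).
  { intros j Hj; pose proof (HJ j Hj) as H; rewrite EZ, fj_Vscale in H.
    destruct (Rmult_integral _ _ H); [lra | assumption]. }
  pose proof (Heq 1%nat ltac:(unfold J12; lia)) as H1; rewrite fj1_torus in H1.
  pose proof (Heq 2%nat ltac:(unfold J12; lia)) as H2; rewrite fj2_torus in H2.
  pose proof (Hle 0%nat ltac:(unfold compl, J12; lia)) as H0; rewrite fj0_torus in H0.
  pose proof (Hle 3%nat ltac:(unfold compl, J12; lia)) as H3; rewrite fj3_torus in H3.
  pose proof (Hle 10%nat ltac:(unfold compl, J12; lia)) as H10; rewrite fj10_torus in H10.
  assert (Hu : X * X + Y * Y = 1) by lra; assert (Hw : P * P + R * R = 1) by lra.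
  rewrite Hu, Hw in H0, H3, H10.
  destruct (torus_point_forced X Y P R Hu Hw) as [-> [-> [-> ->]]]; try lra.
  exists (Cmul (x3 Z) (mkC (-1/2) 0)); split.
  - intros E; destruct (Cmul_eq0 _ _ E) as [H | H]; [easy | injection H; lra].
  - rewrite EZ at 1; rewrite <- Vscale_Vscale; f_equal.
    unfold torus_point, P2; vec_eq.
Qed.

Lemma F_JK_Fbar_JK (J K : nat -> Prop) (Z : V3) : F_JK J K Z -> Fbar_JK J K Z.
Proof. intros [Hnz [HJ HK]]; repeat split; auto; intros i Hi; apply Rlt_le, HK, Hi. Qed.

Lemma P2_nonzero : Vnonzero P2.
Proof. intros [H _]; injection H; lra. Qed.

Lemma proj_eq_P2_F (Z : V3) : Vnonzero Z -> proj_eq P2 Z -> F_ J123_5_10_11 Z.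
Proof.
  intros Hnz [c [Hc ->]]; pose proof (Cnorm2_pos c Hc).
  split; [exact Hnz | split]; intros n Hn; rewrite fj_Vscale;
    destruct (fj_P2_sign n) as [[HJ E] | [HJ E]]; try contradiction; nra.
Qed.

Lemma F_J123_5_10_11_Fbar_J12 (Z : V3) : F_ J123_5_10_11 Z -> Fbar_ J12 Z.
Proof.
  intros [Hnz [HJ HK]]; split; [exact Hnz | split].
  - intros j Hj; apply HJ; unfold J12, J123_5_10_11 in *; lia.
  - intros i Hi.
    assert (Hdec : J123_5_10_11 i \/ ~ J123_5_10_11 i) by (unfold J123_5_10_11; lia).
    destruct Hdec as [H | H]; [rewrite (HJ i H) | apply Rlt_le, HK, H]; lra.
Qed.

Lemma Fbar_J12_iff_proj_eq (Z : V3) : Fbar_ J12 Z <-> Vnonzero Z /\ proj_eq P2 Z.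
Proof.
  split.
  - intros HF; split; [apply HF | now apply Fbar_J12_proj_eq].
  - intros [Hnz HP]; now apply F_J123_5_10_11_Fbar_J12, proj_eq_P2_F.
Qed.

Theorem proposition5p4 :
  (forall Z : V3, ~ F_ J12 Z) /\
  exists P2 : V3,
    Vnonzero P2 /\ fj 0%nat P2 < 0 /\ proj_fixed G2 P2 /\
    (forall Z : V3, Vnonzero Z -> fj 0%nat Z < 0 -> proj_fixed G2 Z -> proj_eq P2 Z) /\
    (forall Z : V3, Fbar_ J12 Z <-> F_ J123_5_10_11 Z) /\
    (forall Z : V3, Fbar_ J12 Z <-> (Vnonzero Z /\ proj_eq P2 Z)).
Proof.
  split.
  - intros Z HF.
    destruct (proj1 (Fbar_J12_iff_proj_eq Z) (F_JK_Fbar_JK _ _ Z HF)) as [Hnz HP].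
    destruct (proj_eq_P2_F Z Hnz HP) as [_ [HJ _]], HF as [_ [_ HK]].
    assert (fj 3 Z = 0) by (apply HJ; unfold J123_5_10_11; lia).
    assert (fj 3 Z < 0) by (apply HK; unfold compl, J12; lia).
    lra.
  - exists P2; split; [exact P2_nonzero | split; [rewrite fj0_P2; lra | split]].
    + exists C1; exact P2_fixed.
    + split; [exact G2_fixed_unique | split; [intros Z; split | exact Fbar_J12_iff_proj_eq]].
      * intros HF; apply Fbar_J12_iff_proj_eq in HF; destruct HF; now apply proj_eq_P2_F.
      * apply F_J123_5_10_11_Fbar_J12.
Qed.
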